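(* Let $1\le p\le q$ and let $\mu=(a_1,\dots,a_p\mid b_1,\dots,b_q)\in\mathbb{Z}^{p+q}$ be $\Delta^+(\mathfrak{k},\mathfrak{t})$-dominant and u-large, such that $\mu-\beta$ is also $\Delta^+(\mathfrak{k},\mathfrak{t})$-dominant. (a) If $b_1\ge 2p+1$, then $\|\mu\|_{\mathrm{spin}}>\|\mu-\beta\|_{\mathrm{spin}}$. (b) If $a_1\ge 2q+1$, then $\|\mu\|_{\mathrm{spin}}>\|\mu-\beta\|_{\mathrm{spin}}$.
   Context: Weights are vectors in $\mathbb{R}^n$, $n=p+q$, written $(x_1,\dots,x_p\mid y_1,\dots,y_q)$, with Euclidean norm $\|\cdot\|$. $\rho_c=(p,p-1,\dots,1\mid q,q-1,\dots,1)$, $\beta=(1,0,\dots,0\mid1,0,\dots,0)$. $\Delta^+(\mathfrak{k},\mathfrak{t})$-dominant means $x_1\ge\cdots\ge x_p\ge0$ and $y_1\ge\cdots\ge y_q\ge0$. For $\nu\in\mathbb{Z}^n$, $\{\nu\}$ is obtained by taking absolute values of all coordinates and sorting the first $p$ and the last $q$ coordinates separately in decreasing order; $\|\nu\|_{\mathfrak{k}}:=\|\{\nu\}+\rho_c\|$. $\Omega_{p,q}$ is the set of $(x\mid y)\in\mathbb{Z}^n$ with $q\ge x_1\ge\cdots\ge x_p\ge0$ and $y_j=\#\{i\mid q-x_i\ge j\}$ ($1\le j\le q$). Spin norm: $\|\nu\|_{\mathrm{spin}}=\min_{\tau\in\Omega_{p,q}}\|\nu-\tau\|_{\mathfrak{k}}$.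 $\mu$ is u-large iff there exist $0\le f\le p$, $0\le g\le q$ with $\sum_{i=1}^f a_i+\sum_{j=1}^g b_j>2pq-2(p-f)(q-g)$. *)

From mathcomp Require Import all_boot all_order all_algebra.
Set Implicit Arguments. Unset Strict Implicit. Unset Printing Implicit Defensive.
Import Order.TTheory GRing.Theory Num.Theory.
Local Open Scope ring_scope.

(* A weight (x_1..x_p | y_1..y_q) in Z^{p+q} is represented by the pair of
   sequences x (length p) and y (length q); index 0 is coordinate 1. *)

Definition dominant (s : seq int) : bool :=
  sorted (fun u v : int => v <= u) s && all (fun u : int => 0 <= u) s.

Definition addv (s t : seq int) : seq int := [seq u.1 + u.2 | u <- zip s t].
Definition subv (s t : seq int) : seq int := [seq u.1 - u.2 | u <- zip s t].

Definition rho_c (k : nat) : seq int := [seq ((k - i)%N)%:Z | i <- iota 0 k].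

Definition curly (s : seq int) : seq int :=
  sort (fun u v : int => v <= u) [seq `|z| | z <- s].

Definition normsq (s : seq int) : int := \sum_(z <- s) z ^+ 2.

Definition euclid_norm (R : rcfType) (u v : seq int) : R :=
  Num.sqrt ((normsq u + normsq v)%:~R).

Definition norm_k (R : rcfType) (x y : seq int) : R :=
  euclid_norm R (addv (curly x) (rho_c (size x))) (addv (curly y) (rho_c (size y))).

(* Omega_{p,q}: x given by f : 'I_p -> {0..q}, q >= x_1 >= ... >= x_p >= 0,
   y_j = #{ i | q - x_i >= j }, 1 <= j <= q. *)
Definition omega_x (p q : nat) (f : {ffun 'I_p -> 'I_q.+1}) : seq nat :=
  [seq nat_of_ord (f i) | i <- enum 'I_p].
Definition in_omega (p q : nat) (f : {ffun 'I_p -> 'I_q.+1}) : bool :=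
  sorted geq (omega_x f).
Definition omega_y (q : nat) (x : seq nat) : seq nat :=
  [seq count (fun xi => (j <= q - xi)%N) x | j <- iota 1 q].
Definition tau_x (p q : nat) (f : {ffun 'I_p -> 'I_q.+1}) : seq int :=
  [seq n%:Z | n <- omega_x f].
Definition tau_y (p q : nat) (f : {ffun 'I_p -> 'I_q.+1}) : seq int :=
  [seq n%:Z | n <- omega_y q (omega_x f)].

Definition omega0 (p q : nat) : {ffun 'I_p -> 'I_q.+1} := [ffun => ord0].

(* ||nu||_spin = min_{tau in Omega_{p,q}} || nu - tau ||_k
   (the seed omega0 is itself an element of Omega_{p,q}). *)
Definition spin_norm (R : rcfType) (p q : nat) (x y : seq int) : R :=
  \big[Num.min/norm_k R (subv x (tau_x (omega0 p q))) (subv y (tau_y (omega0 p q)))]_(f : {ffun 'I_p -> 'I_q.+1} | in_omega f)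
     norm_k R (subv x (tau_x f)) (subv y (tau_y f)).

Definition u_large (p q : nat) (a b : seq int) : bool :=
  [exists f : 'I_p.+1, exists g : 'I_q.+1,
    ((2 * p * q)%N%:Z - (2 * (p - f) * (q - g))%N%:Z <
       \sum_(i < f) a`_i + \sum_(j < g) b`_j)].

(* subtract 1 from the first coordinate of a block (beta = (1,0..|1,0..)) *)
Definition minus_first (s : seq int) : seq int :=
  match s with [::] => [::] | z :: t => (z - 1) :: t end.

(** For a block c, the quantity ||{c} + rho_c||^2 - ||rho_c||^2 equals the
    symmetric "energy" E(c) = sum_i (c_i^2 + c_i) + sum_(i,j) max(c_i, c_j) of
    |c|, so ||mu||_spin is governed by the minimum over tau = (x|y) in
    Omega_{p,q} of E(|a - x|) + E(|b - y|).  E decreases when one coordinate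
    decreases, and does not increase when one unit moves from a coordinate c_k
    to a coordinate c_i with c_i + 1 <= c_k.  Hence it suffices to find, for
    every tau, some tau' with smaller energy at mu - beta.  If both first
    residuals a_1 - x_1 and b_1 - y_1 are positive, tau' = tau.  Otherwise, in
    case (a) lower the last maximal x-coordinate, which raises one y-coordinate,
    and in case (b) raise the first non-maximal x-coordinate, which lowers one
    y-coordinate; since y <= p (resp. x <= q), the bound b_1 >= 2p + 1
    (resp. a_1 >= 2q + 1) pays for the extra unit. *)

From Pilot Require Import Defs.
From mathcomp Require Import all_boot all_order all_algebra zify ring lra.
(* [Defs.addv] and [Defs.subv] are shadowed by the vector-space operations of
   [all_algebra]. *)
Import Defs Order.TTheory GRing.Theory Num.Theory.
Set Implicit Arguments.
Unset Strict Implicit.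
Local Open Scope ring_scope.

Definition energy (s : seq int) : int :=
  \sum_(z <- s) (z ^+ 2 + z) + \sum_(z <- s) \sum_(w <- s) Num.max z w.

Lemma rho_cS n : rho_c n.+1 = n.+1%:Z :: rho_c n.
Proof.
rewrite /rho_c /= subn0 -[in iota 1 n](addn0 1%N) iotaDl -map_comp.
by congr cons; apply: eq_map => i /=; rewrite subSS.
Qed.

Lemma energy_cons_max (h : int) t : all (fun w => w <= h) t ->
  energy (h :: t) = energy t + h ^+ 2 + 2 * h * (size t).+1%:Z.
Proof.
move=> /allP ht.
have col : \sum_(w <- t) Num.max h w = h * (size t)%:Z.
  rewrite (eq_big_seq (fun=> h)) => [|w /ht /max_idPl //].
  by rewrite big_const_seq count_predT iter_addr addr0 -natz mulr_natr.
have rows : \sum_(z <- t) \sum_(w <- h :: t) Num.max z w =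
    h * (size t)%:Z + \sum_(z <- t) \sum_(w <- t) Num.max z w.
  rewrite -col -big_split; apply: eq_big_seq => z zt.
  by rewrite big_cons maxC (max_idPl (ht z zt)).
rewrite /energy !big_cons maxxx col rows intS; ring.
Qed.

Lemma normsq_cons z s : normsq (z :: s) = z ^+ 2 + normsq s.
Proof. by rewrite /normsq big_cons. Qed.

Lemma energy_sorted c : sorted (fun u v : int => v <= u) c ->
  normsq (addv c (rho_c (size c))) = energy c + normsq (rho_c (size c)).
Proof.
elim: c => [|h t IH] sorted_ht; first by rewrite /normsq /energy !big_nil.
have ht : all (fun w => w <= h) t.
  by apply: order_path_min sorted_ht => x y z xy yz; apply: le_trans yz xy.
rewrite energy_cons_max // [size _]/= rho_cS !normsq_cons.
by rewrite IH ?(path_sorted sorted_ht) // intS /=; ring.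
Qed.

Lemma energy_perm s s' : perm_eq s s' -> energy s = energy s'.
Proof.
move=> ss'; rewrite /energy (perm_big _ ss') [in LHS](perm_big _ ss').
by congr (_ + _); apply: eq_bigr => z _; apply: perm_big.
Qed.

Lemma normsq_curly_rho s : normsq (addv (curly s) (rho_c (size s))) =
  energy [seq `|z| | z <- s] + normsq (rho_c (size s)).
Proof.
have size_curly : size (curly s) = size s by rewrite size_sort size_map.
rewrite -{1}size_curly energy_sorted ?size_curly.
  by rewrite (@energy_perm _ [seq `|z| | z <- s] (permEl (perm_sort _ _))).
by apply: sort_sorted => u v; apply: le_total.
Qed.

Lemma normsq_ge0 s : 0 <= normsq s.
Proof. by apply: sumr_ge0 => z _; apply: sqr_ge0. Qed.

Lemma big_mkseq (R : nmodType) (T : Type) n (c : nat -> T) (F : T -> R) :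
  \sum_(z <- mkseq c n) F z = \sum_(i < n) F (c i).
Proof. by rewrite big_map -{1}(subn0 n) big_mkord. Qed.

Lemma energy_mkseq n c : energy (mkseq c n) =
  \sum_(i < n) (c i ^+ 2 + c i) + \sum_(i < n) \sum_(j < n) Num.max (c i) (c j).
Proof.
by rewrite /energy !big_mkseq; congr (_ + _); apply: eq_bigr => i _; rewrite big_mkseq.
Qed.

Lemma eq_in_mkseq (T : Type) n (c c' : nat -> T) :
  (forall i, (i < n)%N -> c' i = c i) -> mkseq c' n = mkseq c n.
Proof. by move=> cc'; apply/eq_in_map => i; rewrite mem_iota => /cc'. Qed.

Lemma energy_mkseq_lt n c c' k : (forall i, (i < n)%N -> 0 <= c' i <= c i) ->
  (k < n)%N -> c' k < c k -> energy (mkseq c' n) < energy (mkseq c n).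
Proof.
move=> le_c'c lt_kn lt_c'c; rewrite !energy_mkseq; apply: ltr_leD.
  rewrite [ltLHS](bigD1 (Ordinal lt_kn)) // [ltRHS](bigD1 (Ordinal lt_kn)) //=.
  apply: ltr_leD; first by have := le_c'c k lt_kn; nia.
  by apply: ler_sum => i _; have := le_c'c i (ltn_ord i); nia.
apply: ler_sum => i _; apply: ler_sum => j _.
by have := le_c'c i (ltn_ord i); have := le_c'c j (ltn_ord j); lia.
Qed.

Lemma bigD2 (R : nmodType) n (i k : 'I_n) : i != k -> forall F : 'I_n -> R,
  \sum_(a < n) F a = F i + F k + \sum_(a < n | (a != i) && (a != k)) F a.
Proof.
move=> ik F; rewrite (bigD1 i) //= (bigD1 k) 1?eq_sym //= addrA.
by congr (_ + _); apply: eq_bigl => a; rewrite andbC.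
Qed.

Lemma max_transfer_le (x y z : int) : x + 1 <= y ->
  Num.max (x + 1) z + Num.max (y - 1) z <= Num.max x z + Num.max y z.
Proof. lia. Qed.

Section Transfer.
Variables (n : nat) (c c' : nat -> int) (i k : nat).
Hypotheses (lt_in : (i < n)%N) (lt_kn : (k < n)%N) (ne_ik : i <> k).
Hypothesis c'_out : forall a, (a < n)%N -> a <> i -> a <> k -> c' a = c a.
Hypotheses (c'i : c' i = c i + 1) (c'k : c' k = c k - 1).

Let I := Ordinal lt_in.
Let K := Ordinal lt_kn.
Let out (a : 'I_n) := (a != I) && (a != K).

Let IK : I != K.
Proof. by apply/eqP => -[]. Qed.

Let c'_outE (a : 'I_n) : out a -> c' a = c a.
Proof.
case/andP=> /eqP aI /eqP aK; apply: c'_out => // eq_a.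
  by apply: aI; apply: val_inj.
by apply: aK; apply: val_inj.
Qed.

Let sum_out (F : int -> int) :
  \sum_(a < n | out a) F (c' a) = \sum_(a < n | out a) F (c a).
Proof. by apply: eq_bigr => a /c'_outE ->. Qed.

Lemma sum_sq_transfer : \sum_(a < n) (c' a ^+ 2 + c' a) =
  \sum_(a < n) (c a ^+ 2 + c a) + 2 * (c i + 1 - c k).
Proof. by rewrite !(bigD2 IK) (sum_out (fun x => x ^+ 2 + x)) /= c'i c'k; ring. Qed.

Lemma sum_max_transfer : c i + 1 <= c k ->
  \sum_(a < n) \sum_(b < n) Num.max (c' a) (c' b) <=
  \sum_(a < n) \sum_(b < n) Num.max (c a) (c b).
Proof.
move=> le_ik.
have row (d : nat -> int) a : \sum_(b < n) Num.max (d a) (d b) =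
    Num.max (d a) (d i) + Num.max (d a) (d k) +
    \sum_(b < n | out b) Num.max (d a) (d b).
  exact: (bigD2 IK (fun b => Num.max (d a) (d b))).
have out_rows : \sum_(b < n | out b) Num.max (c i + 1) (c' b) +
    \sum_(b < n | out b) Num.max (c k - 1) (c' b) <=
    \sum_(b < n | out b) Num.max (c i) (c b) + \sum_(b < n | out b) Num.max (c k) (c b).
  rewrite !sum_out -!big_split; apply: ler_sum => b _.
  exact: max_transfer_le.
have out_cols : \sum_(a < n | out a) \sum_(b < n) Num.max (c' a) (c' b) <=
    \sum_(a < n | out a) \sum_(b < n) Num.max (c a) (c b).
  apply: ler_sum => a /c'_outE c'a; rewrite (row c' a) (row c a) c'a c'i c'k.
  by rewrite (sum_out (Num.max (c a))) lerD2r; lia.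
have corner : Num.max (c i + 1) (c i + 1) + Num.max (c i + 1) (c k - 1) +
    (Num.max (c k - 1) (c i + 1) + Num.max (c k - 1) (c k - 1)) <=
    Num.max (c i) (c i) + Num.max (c i) (c k) +
    (Num.max (c k) (c i) + Num.max (c k) (c k)).
  by lia.
by rewrite !(bigD2 IK) /= c'i c'k; move: out_rows out_cols corner; rewrite /out; lra.
Qed.

Lemma energy_mkseq_transfer : c i + 1 <= c k ->
  energy (mkseq c' n) <= energy (mkseq c n) + 2 * (c i + 1 - c k).
Proof.
by move=> le_ik; rewrite !energy_mkseq sum_sq_transfer; have := sum_max_transfer le_ik; lia.
Qed.

End Transfer.

Definition block_energy n (u : seq int) (t : nat -> nat) : int :=
  energy (mkseq (fun i => `|u`_i - (t i)%:Z|) n).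

Lemma block_energy_ge0 n (u : seq int) t : 0 <= block_energy n u t.
Proof.
rewrite /block_energy energy_mkseq.
by apply: addr_ge0; apply: sumr_ge0 => i _; [lia | apply: sumr_ge0 => j _; lia].
Qed.

Lemma nth_minus_first0 (u : seq int) :
  (0 < size u)%N -> (minus_first u)`_0 = u`_0 - 1.
Proof. by case: u. Qed.

Lemma nth_minus_first_gt0 (u : seq int) i : (0 < i)%N -> (minus_first u)`_i = u`_i.
Proof. by case: u; case: i. Qed.

Lemma block_energy_first_slack n (u : seq int) (t : nat -> nat) :
  (0 < n)%N -> (0 < size u)%N -> 1 <= u`_0 - (t 0%N)%:Z ->
  block_energy n (minus_first u) t < block_energy n u t.
Proof.
move=> n_gt0 u_gt0 slack; apply: (@energy_mkseq_lt _ _ _ 0) => //.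
  by move=> [|i] _; rewrite ?nth_minus_first0 ?nth_minus_first_gt0 //; lia.
by rewrite nth_minus_first0 //; lia.
Qed.

Lemma block_energy_lower_tied n (u : seq int) (t t' : nat -> nat) k :
  size u = n -> (k < n)%N -> u`_0 <= (t 0%N)%:Z -> t k = t 0%N ->
  (forall i, (0 < i < n)%N -> u`_i < u`_0) ->
  (forall i, (i < n)%N -> t i = t' i + (i == k))%N ->
  block_energy n (minus_first u) t' <= block_energy n u t.
Proof.
move=> size_u lt_kn le_u0 tk_t0 u_lt_u0 tt'.
have n_gt0 : (0 < n)%N by apply: leq_ltn_trans lt_kn.
have u_gt0 : (0 < size u)%N by rewrite size_u.
have t0 : t 0%N = (t' 0%N + (k == 0%N))%N by rewrite eq_sym; apply: tt'.
have [k0|k_gt0] := posnP k.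
  rewrite /block_energy (eq_in_mkseq (c := fun i => `|u`_i - (t i)%:Z|)) // => -[|i] lt_in.
    by rewrite nth_minus_first0 // t0 k0; lia.
  by rewrite nth_minus_first_gt0 // tt' // k0 addn0.
have tk : t k = (t' k).+1 by rewrite tt' // eqxx addn1.
have uk := u_lt_u0 k; rewrite k_gt0 lt_kn in uk.
apply: le_trans (energy_mkseq_transfer (c := fun i => `|u`_i - (t i)%:Z|)
  n_gt0 lt_kn _ _ _ _ _) _.
- by apply/eqP; rewrite eq_sym -lt0n.
- move=> [|i] lt_in // _ ne_ik.
  by rewrite nth_minus_first_gt0 // tt' // (introF eqP ne_ik) addn0.
- by rewrite nth_minus_first0 // t0 (gtn_eqF k_gt0); lia.
- by rewrite nth_minus_first_gt0 // tk; move: le_u0; rewrite -tk_t0 tk; lia.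
- by rewrite tk_t0; lia.
- by rewrite tk_t0 gerDl; lia.
Qed.

Lemma block_energy_raise_bounded n m (u : seq int) (t t' : nat -> nat) j :
  size u = n -> (j < n)%N -> (2 * m + 1)%N%:Z <= u`_0 ->
  (forall i, (0 < i < n)%N -> 0 <= u`_i) -> (forall i, (i < n)%N -> t' i <= m)%N ->
  (forall i, (i < n)%N -> t' i = t i + (i == j))%N ->
  block_energy n (minus_first u) t' < block_energy n u t.
Proof.
move=> size_u lt_jn u0_big u_ge0 t'_le tt'.
have n_gt0 : (0 < n)%N by apply: leq_ltn_trans lt_jn.
have u_gt0 : (0 < size u)%N by rewrite size_u.
have t'0_le := t'_le 0%N n_gt0.
have t'0 := tt' 0%N n_gt0.
have [j0|j_gt0] := posnP j.
  rewrite j0 eqxx in t'0.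
  apply: (@energy_mkseq_lt _ _ _ 0) => // [[|i] lt_in|].
  - by rewrite nth_minus_first0 // t'0; lia.
  - by rewrite nth_minus_first_gt0 // tt' // j0 addn0; lia.
  - by rewrite nth_minus_first0 // t'0; lia.
rewrite eq_sym (gtn_eqF j_gt0) addn0 in t'0.
have t'j := tt' j lt_jn; rewrite eqxx addn1 in t'j.
have t'j_le := t'_le j lt_jn.
have uj : 0 <= u`_j by apply: u_ge0; rewrite j_gt0.
have c'_eq i : (i < n)%N -> i <> 0%N -> i <> j ->
    `|(minus_first u)`_i - (t' i)%:Z| = `|u`_i - (t i)%:Z|.
  move=> lt_in /eqP; rewrite -lt0n => i_gt0 ne_ij.
  by rewrite nth_minus_first_gt0 // tt' // (introF eqP ne_ij) addn0.
have [slack_j|no_slack_j] := lerP 1 (u`_j - (t j)%:Z).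
  apply: (@energy_mkseq_lt _ _ _ 0) => // [i lt_in|]; last first.
    by rewrite nth_minus_first0 // t'0; lia.
  have [->|i_gt0] := posnP i; first by rewrite nth_minus_first0 // t'0; lia.
  have [->|ne_ij] := eqVneq i j; first by rewrite nth_minus_first_gt0 // t'j; lia.
  by rewrite c'_eq //; [lia | apply/eqP; rewrite -lt0n | apply/eqP].
apply: le_lt_trans (energy_mkseq_transfer (c := fun i => `|u`_i - (t i)%:Z|)
  lt_jn n_gt0 _ _ _ _ _) _.
- by apply/eqP; rewrite -lt0n.
- by move=> i lt_in ne_ij ne_i0; apply: c'_eq.
- by rewrite nth_minus_first_gt0 // t'j; lia.
- by rewrite nth_minus_first0 // t'0; lia.
- by lia.
- by rewrite gtrDl; lia.
Qed.

Lemma dominant_nth (s : seq int) i j :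
  dominant s -> (i <= j < size s)%N -> 0 <= s`_j <= s`_i.
Proof.
case/andP=> s_sorted /allP s_ge0 /andP[le_ij lt_js]; rewrite s_ge0 ?mem_nth //=.
apply: (sorted_leq_nth (rev_trans le_trans) (@lexx _ _) 0 s_sorted); rewrite ?inE //.
exact: leq_ltn_trans lt_js.
Qed.

Lemma size_minus_first (u : seq int) : size (minus_first u) = size u.
Proof. by case: u. Qed.

Lemma dominant_minus_first (u : seq int) n : size u = n -> (0 < n)%N ->
  dominant (minus_first u) -> 1 <= u`_0 /\ forall i, (0 < i < n)%N -> 0 <= u`_i < u`_0.
Proof.
move=> <- u_gt0 dom_u'.
have nth_u' j : (j < size u)%N -> 0 <= (minus_first u)`_j <= (minus_first u)`_0.
  by move=> lt_ju; apply: dominant_nth dom_u' _; rewrite size_minus_first lt_ju.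
split=> [|i /andP[i_gt0 lt_iu]].
  by have := nth_u' 0%N u_gt0; rewrite nth_minus_first0 //; lia.
by have := nth_u' i lt_iu; rewrite nth_minus_first0 // nth_minus_first_gt0 //; lia.
Qed.

Section Omega.
Variables p q : nat.
Implicit Types f : {ffun 'I_p -> 'I_q.+1}.
Local Open Scope nat_scope.

Definition tx f i := nth 0 (omega_x f) i.
Definition ty f j := nth 0 (omega_y q (omega_x f)) j.

Lemma size_omega_x f : size (omega_x f) = p.
Proof. by rewrite size_map size_enum_ord. Qed.

Lemma tx_ord f (i : 'I_p) : tx f i = f i.
Proof. by rewrite /tx (nth_map i) ?size_enum_ord // nth_ord_enum. Qed.

Lemma tx_le f i : i < p -> tx f i <= q.
Proof. by move=> lt_ip; rewrite (tx_ord f (Ordinal lt_ip)) -ltnS. Qed.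

Lemma ty_count f j : j < q -> ty f j = count (fun xi => j < q - xi) (omega_x f).
Proof. by move=> lt_jq; rewrite /ty (nth_map 0) ?size_iota // nth_iota. Qed.

Lemma ty_le f j : j < q -> ty f j <= p.
Proof. by move=> lt_jq; rewrite ty_count // -{2}(size_omega_x f) count_size. Qed.

Lemma nth_tau_x f i : i < p -> ((tau_x f)`_i = (tx f i)%:Z)%R.
Proof. by move=> lt_ip; rewrite (nth_map 0) ?size_omega_x. Qed.

Lemma nth_tau_y f j : j < q -> ((tau_y f)`_j = (ty f j)%:Z)%R.
Proof. by move=> lt_jq; rewrite (nth_map 0) // size_map size_iota. Qed.

Lemma size_tau_x f : size (tau_x f) = p.
Proof. by rewrite size_map size_omega_x. Qed.

Lemma size_tau_y f : size (tau_y f) = q.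
Proof. by rewrite !size_map size_iota. Qed.

Lemma in_omegaP f : reflect (forall i, i.+1 < p -> tx f i.+1 <= tx f i) (in_omega f).
Proof. by apply: (iffP (sortedP 0)); rewrite size_omega_x. Qed.

Lemma in_omega_nonincr f i j : in_omega f -> i <= j < p -> tx f j <= tx f i.
Proof.
move=> f_in /andP[le_ij lt_jp].
apply: (sorted_leq_nth (rev_trans leq_trans) leqnn 0 f_in); rewrite ?inE ?size_omega_x //.
exact: leq_ltn_trans lt_jp.
Qed.

Lemma in_omega0 : in_omega (omega0 p q).
Proof.
apply/in_omegaP => i lt_ip.
by rewrite (tx_ord _ (Ordinal lt_ip)) (tx_ord _ (Ordinal (ltnW lt_ip))) !ffunE.
Qed.

Definition set_omega f (k w : nat) : {ffun 'I_p -> 'I_q.+1} :=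
  [ffun i : 'I_p => inord (if i == k :> nat then w else f i : nat)].

Lemma tx_set f k w i : w <= q -> i < p ->
  tx (set_omega f k w) i = if i == k then w else tx f i.
Proof.
move=> le_wq lt_ip; rewrite (tx_ord _ (Ordinal lt_ip)) (tx_ord _ (Ordinal lt_ip)) ffunE /=.
by case: (i == k); rewrite inordK.
Qed.

Lemma in_omega_set f k w : in_omega f -> k < p -> w <= q ->
  (k.+1 < p -> tx f k.+1 <= w) -> (0 < k -> w <= tx f k.-1) ->
  in_omega (set_omega f k w).
Proof.
move=> /in_omegaP f_in lt_kp le_wq next prev; apply/in_omegaP => i lt_i1p.
rewrite !tx_set //; last exact: ltnW.
have [ek|_] := eqVneq i.+1 k; first by subst k; rewrite (ltn_eqF (ltnSn i)); exact: prev.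
by have [ek|_] := eqVneq i k; [subst k; apply: next | apply: f_in].
Qed.

Lemma omega_x_set f k w : w <= q -> k < p ->
  omega_x (set_omega f k w) = set_nth 0 (omega_x f) k w.
Proof.
move=> le_wq lt_kp; apply: (@eq_from_nth _ 0) => [|i].
  by rewrite size_set_nth !size_omega_x; apply/esym/maxn_idPr.
by rewrite size_omega_x => lt_ip; rewrite nth_set_nth /= -/(tx _ i) tx_set.
Qed.

Lemma ty_set f k w j : w <= q -> k < p -> j < q ->
  ty (set_omega f k w) j + (j < q - tx f k) = ty f j + (j < q - w).
Proof.
move=> le_wq lt_kp lt_jq; rewrite !ty_count // omega_x_set //.
rewrite count_set_nth_ltn ?size_omega_x // -/(tx f k).
have : (j < q - tx f k) <= count (fun xi => j < q - xi) (omega_x f).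
  case: ltnP => //= lt_j; rewrite -has_count; apply/hasP.
  by exists (tx f k); rewrite ?mem_nth ?size_omega_x.
lia.
Qed.

Lemma omega_last_max f : in_omega f -> 0 < p -> exists k, [/\ k < p,
  forall i, i <= k -> tx f i = tx f 0 & k.+1 < p -> tx f k.+1 < tx f 0].
Proof.
move=> f_in p_gt0; pose below x := x < tx f 0.
pose m := find below (omega_x f).
have le_mp : m <= p by rewrite -(size_omega_x f) find_size.
have m_gt0 : 0 < m.
  rewrite lt0n; apply/eqP => m0.
  have : has below (omega_x f) by rewrite has_find -/m m0 size_omega_x.
  by move/(nth_find 0); rewrite -/m m0 -/(tx f 0) /below ltnn.
exists m.-1; split=> [|i le_ik|lt_mp].
- by rewrite prednK // (leq_trans _ le_mp).
- have lt_ip : i < p by lia.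
  apply/eqP; rewrite eqn_leq in_omega_nonincr //= leqNgt.
  apply/negbT/(before_find 0 (a := below)); lia.
- rewrite prednK // in lt_mp *; apply: (nth_find 0 (a := below)).
  by rewrite has_find size_omega_x.
Qed.

Lemma omega_lower_last f : in_omega f -> 0 < tx f 0 ->
  exists2 f', in_omega f' & exists k j, [/\ k < p, j < q, tx f k = tx f 0,
    forall i, i < p -> tx f i = tx f' i + (i == k)
  & forall i, i < q -> ty f' i = ty f i + (i == j)].
Proof.
move=> f_in x0_gt0; set v := tx f 0 in x0_gt0 *.
have p_gt0 : 0 < p.
  by rewrite -(size_omega_x f); move: x0_gt0; rewrite /v /tx; case: (omega_x f).
have le_vq : v <= q by apply: tx_le.
have [k [lt_kp top next]] := omega_last_max f_in p_gt0.
have xk : tx f k = v by apply: top.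
exists (set_omega f k v.-1).
  by apply: in_omega_set => //; [lia | move=> /next; lia | move=> k_gt0; rewrite top; lia].
exists k, (q - v); split=> //; first by lia.
- by move=> i lt_ip; rewrite tx_set //; [case: eqP => [->|]; lia | lia].
- move=> j lt_jq; have := ty_set f (leq_trans (leq_pred v) le_vq) lt_kp lt_jq.
  by rewrite xk; lia.
Qed.

Lemma omega_top_before f : in_omega f -> 0 < ty f 0 ->
  exists i0, [/\ i0 < p, tx f i0 < q & forall i, i < i0 -> tx f i = q].
Proof.
move=> f_in y0_gt0.
have q_gt0 : 0 < q.
  rewrite lt0n; apply: contraTneq y0_gt0 => q0.
  by rewrite /ty nth_default // size_map size_iota q0.
pose i0 := find (fun x => x < q) (omega_x f).
have has_below : has (fun x => x < q) (omega_x f).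
  rewrite has_count; apply: leq_trans y0_gt0 _; rewrite ty_count //.
  by apply: sub_count => x /=; rewrite subn_gt0.
have lt_i0p : i0 < p by rewrite -(size_omega_x f) -has_find.
exists i0; split=> // [|i lt_ii0]; first exact: (nth_find 0 has_below).
apply/eqP; rewrite eqn_leq tx_le ?(ltn_trans lt_ii0) //= leqNgt.
exact/negbT/(before_find 0 (a := fun x => x < q)).
Qed.

Lemma omega_raise_first f : in_omega f -> 0 < ty f 0 ->
  exists2 f', in_omega f' & exists i0 j, [/\ i0 < p, j < q, ty f j = ty f 0,
    forall i, i < p -> tx f' i = tx f i + (i == i0)
  & forall i, i < q -> ty f i = ty f' i + (i == j)].
Proof.
move=> f_in y0_gt0; have [i0 [lt_i0p lt_vq top_before]] := omega_top_before f_in y0_gt0.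
set v := tx f i0 in lt_vq.
have q_gt0 : 0 < q by apply: leq_ltn_trans lt_vq.
exists (set_omega f i0 v.+1).
  apply: in_omega_set => // [lt_i1p|i0_gt0]; last by rewrite top_before //; lia.
  by apply: leq_trans (leqnSn _); apply: in_omega_nonincr => //; rewrite leqnSn.
have lt_jq : q - v.+1 < q by lia.
exists i0, (q - v.+1); split=> //.
- rewrite !ty_count //; apply: eq_in_count => x /(nthP 0) [i].
  rewrite size_omega_x -/(tx f i) => lt_ip <-.
  have [lt_ii0|le_i0i] := ltnP i i0; first by rewrite top_before //; lia.
  have := @in_omega_nonincr f i0 i f_in; rewrite le_i0i lt_ip -/v; lia.
- by move=> i lt_ip; rewrite tx_set //; case: eqP => [->|]; lia.
- by move=> j lt_j; have := ty_set f lt_vq lt_i0p lt_j; lia.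
Qed.

End Omega.

Lemma energy_abs_subv n (u t : seq int) (t' : nat -> nat) :
  size u = n -> size t = n -> (forall i, (i < n)%N -> t`_i = (t' i)%:Z) ->
  energy [seq `|z| | z <- subv u t] = block_energy n u t'.
Proof.
move=> size_u size_t tt'; congr energy; apply: (@eq_from_nth _ 0).
  by rewrite size_map size_map size_zip size_u size_t minnn size_mkseq.
rewrite size_map size_map size_zip size_u size_t minnn => i lt_in.
rewrite nth_mkseq // (nth_map 0) ?size_map ?size_zip ?size_u ?size_t ?minnn //.
rewrite (nth_map (0, 0)) ?size_zip ?size_u ?size_t ?minnn //.
by rewrite nth_zip ?size_u ?size_t // tt'.
Qed.

Section SpinNorm.
Variables p q : nat.
Implicit Types f : {ffun 'I_p -> 'I_q.+1}.

Definition spin_energy (a b : seq int) f : int :=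
  block_energy p a (tx f) + block_energy q b (ty f).

Lemma norm_k_tau (R : rcfType) (a b : seq int) f : size a = p -> size b = q ->
  norm_k R (subv a (tau_x f)) (subv b (tau_y f)) =
  Num.sqrt ((spin_energy a b f + (normsq (rho_c p) + normsq (rho_c q)))%:~R).
Proof.
move=> size_a size_b; have size_subv u t : size (subv u t) = minn (size u) (size t).
  by rewrite size_map size_zip.
rewrite /norm_k /euclid_norm !normsq_curly_rho !size_subv.
rewrite size_a size_b size_tau_x size_tau_y !minnn.
rewrite (@energy_abs_subv p _ _ (tx f)) ?size_tau_x //; last exact: nth_tau_x.
rewrite (@energy_abs_subv q _ _ (ty f)) ?size_tau_y //; last exact: nth_tau_y.
by rewrite /spin_energy addrACA.
Qed.

Lemma spin_energy_ge0 (a b : seq int) f : 0 <= spin_energy a b f.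
Proof. by apply: addr_ge0; apply: block_energy_ge0. Qed.

Lemma spin_norm_lt (R : rcfType) (a b a' b' : seq int) :
  size a = p -> size b = q -> size a' = p -> size b' = q ->
  (forall f, in_omega f ->
     exists2 f', in_omega f' & spin_energy a' b' f' < spin_energy a b f) ->
  spin_norm R p q a' b' < spin_norm R p q a b.
Proof.
move=> size_a size_b size_a' size_b' descent.
have below f : in_omega f ->
    spin_norm R p q a' b' < norm_k R (subv a (tau_x f)) (subv b (tau_y f)).
  move=> /descent [f' f'_in lt_f'f].
  apply: (le_lt_trans (y := norm_k R (subv a' (tau_x f')) (subv b' (tau_y f')))).
    exact: bigmin_le_cond.
  rewrite !norm_k_tau // ltr_sqrt ?ltr_int ?ltrD2r // ltr0z.
  have := spin_energy_ge0 a' b' f'.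
  by have := normsq_ge0 (rho_c p); have := normsq_ge0 (rho_c q); lia.
by apply: lt_bigmin => [|f /below //]; apply: below (in_omega0 p q).
Qed.

End SpinNorm.

Section Descent.
Variables (p q : nat) (a b : seq int).
Hypotheses (size_a : size a = p) (size_b : size b = q).
Hypotheses (p_gt0 : (0 < p)%N) (q_gt0 : (0 < q)%N).
Hypotheses (a0_ge1 : 1 <= a`_0) (b0_ge1 : 1 <= b`_0).
Hypothesis a_lt : forall i, (0 < i < p)%N -> 0 <= a`_i < a`_0.
Hypothesis b_lt : forall j, (0 < j < q)%N -> 0 <= b`_j < b`_0.

Let a' := minus_first a.
Let b' := minus_first b.
Implicit Types f : {ffun 'I_p -> 'I_q.+1}.

Lemma spin_energy_descent_b f : in_omega f -> (2 * p + 1)%N%:Z <= b`_0 ->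
  exists2 f' : {ffun 'I_p -> 'I_q.+1}, in_omega f' & spin_energy a' b' f' < spin_energy a b f.
Proof.
move=> f_in b0_big; have y0_le := ty_le f q_gt0.
have [a_slack|a_tight] := lerP 1 (a`_0 - (tx f 0%N)%:Z).
  exists f => //; apply: ltrD; apply: block_energy_first_slack; rewrite ?size_a ?size_b //; lia.
have x0_gt0 : (0 < tx f 0)%N by lia.
have [f' f'_in [k [j [lt_kp lt_jq xk x_f' y_f']]]] := omega_lower_last f_in x0_gt0.
exists f' => //; apply: ler_ltD.
  apply: block_energy_lower_tied xk _ x_f' => //; first lia.
  by move=> i /a_lt; lia.
apply: (block_energy_raise_bounded (m := p)) y_f' => //.
- by move=> i /b_lt /andP[].
- by move=> i /ty_le.
Qed.

Lemma spin_energy_descent_a f : in_omega f -> (2 * q + 1)%N%:Z <= a`_0 ->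
  exists2 f' : {ffun 'I_p -> 'I_q.+1}, in_omega f' & spin_energy a' b' f' < spin_energy a b f.
Proof.
move=> f_in a0_big; have x0_le := tx_le f p_gt0.
have [b_slack|b_tight] := lerP 1 (b`_0 - (ty f 0%N)%:Z).
  exists f => //; apply: ltrD; apply: block_energy_first_slack; rewrite ?size_a ?size_b //; lia.
have y0_gt0 : (0 < ty f 0)%N by lia.
have [f' f'_in [i0 [j [lt_i0p lt_jq yj x_f' y_f']]]] := omega_raise_first f_in y0_gt0.
exists f' => //; apply: ltr_leD.
  apply: (block_energy_raise_bounded (m := q)) x_f' => //.
  - by move=> i /a_lt /andP[].
  - by move=> i /tx_le.
apply: block_energy_lower_tied yj _ y_f' => //; first lia.
by move=> i /b_lt; lia.
Qed.

End Descent.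

Theorem proposition3p1 (R : rcfType) (p q : nat)
    (a : p.-tuple int) (b : q.-tuple int) :
  (1 <= p)%N -> (p <= q)%N ->
  dominant a -> dominant b ->
  u_large p q a b ->
  dominant (minus_first a) -> dominant (minus_first b) ->
  (((2 * p + 1)%N%:Z <= b`_0) ->
     spin_norm R p q (minus_first a) (minus_first b) < spin_norm R p q a b) /\
  (((2 * q + 1)%N%:Z <= a`_0) ->
     spin_norm R p q (minus_first a) (minus_first b) < spin_norm R p q a b).
Proof.
move=> p_gt0 le_pq _ _ _ dom_a' dom_b'.
have q_gt0 : (0 < q)%N := leq_trans p_gt0 le_pq.
have size_a : size a = p := size_tuple a.
have size_b : size b = q := size_tuple b.
have [a0_ge1 a_lt] := dominant_minus_first size_a p_gt0 dom_a'.
have [b0_ge1 b_lt] := dominant_minus_first size_b q_gt0 dom_b'.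
have size_a' : size (minus_first a) = p by rewrite size_minus_first.
have size_b' : size (minus_first b) = q by rewrite size_minus_first.
split=> big; apply: spin_norm_lt => // f f_in.
  exact: spin_energy_descent_b.
exact: spin_energy_descent_a.
Qed.
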